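(* In DP-EFB, for every trial $t$, define for $a\in\mathcal A$ $$\theta_t(a):=\frac{[a\in V(\sigma_t)]\,\eta\, d_t(a)}{\gamma\beta(a)+q_t(a)}$$ (taken to be $0$ when $a\notin V(\sigma_t)$). Then $$\psi_t(r)=\sum_{\sigma\in\mathcal S}\Big(\prod_{a\in\mathcal A(\sigma)}\pi_t(a)\Big)\exp\Big(-\sum_{a\in\mathcal A(\sigma)}\theta_t(a)\Big),$$ where $\prod_{a\in\mathcal A(\sigma)}\pi_t(a)=\Pr[\sigma_t=\sigma\mid\pi_t]$.
   Context: Game tree: $V$ is the node set of a finite rooted tree with root $r$ and leaf set $L$; $C(v)$ denotes the set of children of $v$ and $p(v)$ the parent of $v\neq r$. The internal nodes $V\setminus L$ are partitioned into a set $N$ of infosets and a set $\mathcal A$ of actions such that $r\in N$, $C(v)\subseteq\mathcal A$ and $|C(v)|>1$ for every $v\in N$, and $C(a)\subseteq N\cup L$ for every $a\in\mathcal A$. A loss function $\lambda:L\to[0,1]$ is fixed. A (pure) strategy is a map $\sigma:N\to V$ with $\sigma(v)\in C(v)$ for all $v\in N$; an environment is a map $\mu:\mathcal A\to V$ with $\mu(a)\in C(a)$ for all $a\in\mathcal A$. For a strategy $\sigma$, $V(\sigma)$ is the smallest subset of $V$ containing $r$, containing $\sigma(v)$ for every $v\in N\cap V(\sigma)$, and containing $C(a)$ for every $a\in\mathcal A\cap V(\sigma)$. The reduced strategy of $\sigma$ is the restriction of $\sigma$ to $N\cap V(\sigma)$ (with $V$ of it defined as $V(\sigma)$); $\mathcal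 S$ is the set of all reduced strategies. For $\sigma\in\mathcal S$ write $N(\sigma)=N\cap V(\sigma)$, $\mathcal A(\sigma)=\mathcal A\cap V(\sigma)$. Playing a pair $(\sigma,\mu)$, $\sigma\in\mathcal S$, $\mu$ an environment, traverses the root-to-leaf path starting at $r$, moving from $v\in N$ to $\sigma(v)$ and from $a\in\mathcal A$ to $\mu(a)$, stopping at a leaf $u$; the loss is $\Lambda(\sigma,\mu):=\lambda(u)$, and the last action on this path is called the last action encountered. Functions $n,m:N\cup\mathcal A\to\mathbb N$ are defined recursively from the bottom of the tree: for $a\in\mathcal A$, $n(a)=\prod_{v\in C(a)\cap N}n(v)$ and $m(a)=1+\sum_{v\in C(a)\cap N}m(v)$ (empty product $=1$, empty sum $=0$); for $v\in N$, $n(v)=\sum_{a\in C(v)}n(a)$ and $m(v)=\sum_{a\in C(v)}m(a)$. The function $\beta:N\cup\mathcal A\to\mathbb R$ is defined from the top: $\beta(r)=1$, $\beta(a)=m(a)\beta(p(a))$ for $a\in\mathcal A$, $\beta(v)=\beta(p(v))/m(v)$ for $v\in N\setminus\{r\}$. Algorithm DP-EFB (parameters $T$, $\epsilon\in(0,1)$): set $\eta:=\left(\left(\frac{6\ln T}{\epsilon}+\frac{9(e-2)}{\epsilon^2}\right)\frac{m(r)T}{\ln n(r)}\right)^{-1/2}$ and $\gamma:=6\ln(T)\eta/\epsilon$. A policy is a map $\pi:\mathcal A\to[0,1]$ with $\sum_{a\in C(v)}\pi(a)=1$ for all $v\in N$. Initially $\pi_1(a):=n(a)/n(p(a))$ for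 all $a\in\mathcal A$. For $a\in\mathcal A$, let $q_t(a)$ be the product of $\pi_t(a')$ over all actions $a'$ on the path from $r$ to $a$ (including $a$). Environments $\mu_1,\dots,\mu_T$ are fixed in advance. On each trial $t=1,\dots,T$: (i) the server samples $\sigma_t\in\mathcal S$ recursively: starting at $r$, at each visited infoset $v$ it draws $\sigma_t(v)\in C(v)$ with $\Pr[\sigma_t(v)=a]=\pi_t(a)$ independently, and then visits every $v'\in C(\sigma_t(v))\cap N$. (ii) $(\sigma_t,\mu_t)$ is played, giving loss $\ell_t:=\Lambda(\sigma_t,\mu_t)$; let $z_t$ be the last action encountered. (iii) For each $a\in\mathcal A(\sigma_t)$, independently draw $\phi_t(a)$ from the Laplace density $Q(x)=\frac{\epsilon}{4}\exp(-\frac{\epsilon}{2}|x|)$ and set $d_t(a):=[a=z_t]\,\ell_t+\phi_t(a)$ (where $[P]$ is $1$ if $P$ holds and $0$ otherwise); $d_t:\mathcal A(\sigma_t)\to\mathbb R$ is sent to the server. (iv) The server runs $\mathrm{Update}_t(r,1)$, where for $v\in N(\sigma_t)$ and $x>0$, $\mathrm{Update}_t(v,x)$ does: let $b:=\sigma_t(v)$; for each $v'\in C(b)\cap N$ run $\mathrm{Update}_t(v',\pi_t(b)x)$ and call its return value $\psi_t(v')$; set $\omega_t(v):=\exp\!\left(\frac{-\eta\, d_t(b)}{\gamma\beta(b)+\pi_t(b)x}\right)\prod_{v'\in C(b)\cap N}\psi_t(v')$; for all $a\in C(v)$ set $\pi_{t+1}(a):=\frac{[a=b]\,\omega_t(v)\pi_t(a)+[a\ne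 b]\,\pi_t(a)}{1-(1-\omega_t(v))\pi_t(b)}$; return $\psi_t(v):=1-(1-\omega_t(v))\pi_t(b)$. For every $v\in N\setminus N(\sigma_t)$, $\pi_{t+1}(a):=\pi_t(a)$ for all $a\in C(v)$. *)

From HB Require Import structures.
From mathcomp Require Import all_boot all_order all_algebra.
From mathcomp Require Import reals sequences exp.
Set Implicit Arguments. Unset Strict Implicit. Unset Printing Implicit Defensive.
Import Order.TTheory GRing.Theory Num.Theory.
Local Open Scope ring_scope.

(* Game trees.  Nodes form a finite type V, the tree is given by a     *)
(* parent map [par] (with par r = r) and the infoset set N; actions are  *)
(* the internal nodes that are not infosets.                           *)
Section Tree.
Variables (V : finType) (par : V -> V) (r : V) (N : {set V}).

Definition children (v : V) : {set V} := [set u | (u != r) && (par u == v)].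
Definition leaves : {set V} := [set v | children v == set0].
Definition actions : {set V} := [set v | (v \notin leaves) && (v \notin N)].

Definition is_game_tree : Prop :=
  [/\ par r = r,
      (forall v, exists k, iter k par v = r),
      r \in N,
      (forall v, v \in N -> (1 < #|children v|)%N /\ children v \subset actions)
    & (forall a, a \in actions -> children a \subset N :|: leaves)].

Definition closedb (g : V -> option V) (X : {set V}) : bool :=
  [&& r \in X,
      [forall v, (v \in N :&: X) ==> (if g v is Some w then w \in X else true)]
    & [forall a, (a \in actions :&: X) ==> (children a \subset X)]].
Definition Vof (g : V -> option V) : {set V} :=
  [set v | [forall X : {set V}, closedb g X ==> (v \in X)]].

Definition is_strategy (s : {ffun V -> V}) : bool :=
  [forall v, (v \in N) ==> (s v \in children v)].

(* reduced strategy: the restriction of s to N(s), as a partial map *)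
Definition reduce (s : {ffun V -> V}) : {ffun V -> option V} :=
  [ffun v => if v \in N :&: Vof (fun u => Some (s u)) then Some (s v) else None].

Definition reduced_strategies : {set {ffun V -> option V}} :=
  [set reduce s | s in [set s | is_strategy s]].

Definition Nof (rho : {ffun V -> option V}) : {set V} := N :&: Vof rho.
Definition Aof (rho : {ffun V -> option V}) : {set V} := actions :&: Vof rho.

(* n and m, defined bottom-up (fuel #|V| exceeds the height of the tree) *)
Fixpoint nF (k : nat) (v : V) : nat :=
  match k with
  | 0 => 1
  | k'.+1 => if v \in actions then \prod_(u in children v :&: N) nF k' u
             else \sum_(a in children v) nF k' a
  end.
Fixpoint mF (k : nat) (v : V) : nat :=
  match k with
  | 0 => 1
  | k'.+1 => if v \in actions then 1 + \sum_(u in children v :&: N) mF k' u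
             else \sum_(a in children v) mF k' a
  end.
Definition nfun (v : V) : nat := nF #|V| v.
Definition mfun (v : V) : nat := mF #|V| v.

Definition anc (v : V) : {set V} := [set u | [exists k : 'I_#|V|, iter k par v == u]].

Definition step (rho : {ffun V -> option V}) (mu : {ffun V -> V}) (v : V) : V :=
  if v \in N then odflt v (rho v) else if v \in actions then mu v else v.
Definition play_leaf rho mu : V := iter #|V| (step rho mu) r.
Definition last_action rho mu : V :=
  last r [seq u <- traject (step rho mu) r #|V|.+1 | u \in actions].

Section Reals.
Variable R : realType.

Fixpoint betaF (k : nat) (v : V) : R :=
  match k with
  | 0 => 1
  | k'.+1 => if v == r then 1
             else if v \in actions then (mfun v)%:R * betaF k' (par v)
             else betaF k' (par v) / (mfun v)%:R
  end.
Definition beta (v : V) : R := betaF #|V| v.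

Definition qpol (pi : V -> R) (a : V) : R := \prod_(a' in anc a :&: actions) pi a'.

(* Update_t.  [psiF] is the return value of Update(v, x). *)
Section Update.
Variables (pi : V -> R) (rho : {ffun V -> option V}) (d : V -> R) (eta gamma : R).

Definition bch (v : V) : V := odflt v (rho v).

Fixpoint psiF (k : nat) (v : V) (x : R) : R :=
  match k with
  | 0 => 1
  | k'.+1 =>
    1 - (1 - expR (- (eta * d (bch v)) / (gamma * beta (bch v) + pi (bch v) * x))
             * \prod_(u in children (bch v) :&: N) psiF k' u (pi (bch v) * x))
        * pi (bch v)
  end.

Definition omega (v : V) (x : R) : R :=
  expR (- (eta * d (bch v)) / (gamma * beta (bch v) + pi (bch v) * x))
  * \prod_(u in children (bch v) :&: N) psiF #|V| u (pi (bch v) * x).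

(* the argument x with which Update(v, .) is called (Update(r,1), and
   Update(v', pi(b) x) for v' in C(b), b = sigma(v)) *)
Fixpoint xF (k : nat) (v : V) : R :=
  match k with
  | 0 => 1
  | k'.+1 => if v == r then 1 else pi (par v) * xF k' (par (par v))
  end.
Definition xcall (v : V) : R := xF #|V| v.

Definition newpi (a : V) : R :=
  if (a \in actions) && (par a \in Nof rho) then
    let v := par a in
    let w := omega v (xcall v) in
    ((if a == bch v then w * pi a else pi a) / (1 - (1 - w) * pi (bch v)))
  else pi a.
End Update.

(* DP-EFB.  sig t = sampled reduced strategy sigma_t, mu t = environment *)
(* mu_t, phi t a = Laplace noise phi_t(a) (the identity is pointwise in *)
(* the sampled outcomes).                                              *)
Section DPEFB.
Variables (lam : V -> R) (T : nat) (eps : R).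
Variables (mu : nat -> {ffun V -> V}) (sig : nat -> {ffun V -> option V})
          (phi : nat -> V -> R).

Definition eta_dp : R :=
  powR (((6 * ln T%:R) / eps + 9 * (expR 1 - 2) / eps ^+ 2)
        * ((mfun r)%:R * T%:R) / ln (nfun r)%:R) (- 2^-1).
Definition gamma_dp : R := 6 * ln T%:R * eta_dp / eps.

Definition pi1 (a : V) : R := (nfun a)%:R / (nfun (par a))%:R.

Definition loss_t (t : nat) : R := lam (play_leaf (sig t) (mu t)).
Definition z_t (t : nat) : V := last_action (sig t) (mu t).
Definition d_t (t : nat) (a : V) : R :=
  (if a == z_t t then loss_t t else 0) + phi t a.

(* polF t = pi_{t+1} *)
Fixpoint polF (t : nat) : V -> R :=
  match t with
  | 0 => pi1
  | t'.+1 => newpi (polF t') (sig t'.+1) (d_t t'.+1) eta_dp gamma_dp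
  end.
Definition pi_t (t : nat) : V -> R := polF t.-1.

(* psi_t(r): return value of Update_t(r, 1) *)
Definition psi_root (t : nat) : R :=
  psiF (pi_t t) (sig t) (d_t t) eta_dp gamma_dp #|V|.+1 r 1.

Definition theta (t : nat) (a : V) : R :=
  if a \in Vof (sig t) then
    eta_dp * d_t t a / (gamma_dp * beta a + qpol (pi_t t) a)
  else 0.
End DPEFB.
End Reals.
End Tree.

From Pilot Require Import Defs.
From HB Require Import structures.
From mathcomp Require Import all_boot all_order all_algebra.
From mathcomp Require Import reals sequences exp.
From mathcomp Require Import zify ring lra.
Import Order.TTheory GRing.Theory Num.Theory.
Local Open Scope ring_scope.
Set Implicit Arguments. Unset Strict Implicit. Unset Printing Implicit Defensive.

(* Let [st] be a full strategy whose reduction is the sampled [sigma_t].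
   Drawing a full strategy [s] with probability [prod_(v in N) pi (s v)] and
   reducing it yields each reduced strategy [sigma] with probability
   [prod_(a in A(sigma)) pi a], so the right-hand side is the expectation of
   [exp (- sum_(a in A(s)) theta a)].  Since [theta] vanishes off [V(sigma_t)],
   this exponential factors along the subtree of [st]: at an infoset [v] with
   [b = st v] it is [exp (- theta b)] times the factors at the infosets below
   [b] when [s v = b], and [1] otherwise.  Choices made in disjoint subtrees are
   independent, so its expectation at [v] is
   [1 - (1 - exp (- theta b) * prod_u E_u) * pi b], which is the value returned
   by [Update(v, x)]: the argument [x] of that call is the reach probability
   [q v], so the denominator [gamma * beta b + pi b * x] used by [Update] is
   the one of [theta b].  These expectations use that [pi_t] sums to one at
   every infoset, which each update preserves. *)

Lemma update_denom_gt0 (K : realFieldType) (p w : K) :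
  0 <= p <= 1 -> 0 < w -> 0 < 1 - (1 - w) * p.
Proof.
move=> /andP[p_ge0 p_le1] w_gt0.
have [p_lt1|p_ge1] := ltrP p 1; first by nra.
have -> : p = 1 by apply/le_anti; rewrite p_le1.
by rewrite mulr1 subKr.
Qed.

Section GameTree.
Variables (V : finType) (par : V -> V) (r : V) (N : {set V}).
Hypothesis tree : is_game_tree par r N.
Local Notation C := (children par r).
Local Notation act := (actions par r N).
Local Notation lvs := (leaves par r).
Local Notation anc := (anc par).

(** * Depth, ancestors and subtrees *)

Lemma par_root : par r = r. Proof. by case: tree. Qed.
Lemma root_in_N : r \in N. Proof. by case: tree. Qed.

Lemma iter_par_reaches_root v : exists k, iter k par v == r.
Proof. by case: tree => _ reach _ _ _; have [k Hk] := reach v; exists k; apply/eqP. Qed.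

Definition depth v := ex_minn (iter_par_reaches_root v).

Lemma iter_depth v : iter (depth v) par v = r.
Proof. by rewrite /depth; case: ex_minnP => k /eqP. Qed.

Lemma depth_min v k : iter k par v = r -> (depth v <= k)%N.
Proof. by rewrite /depth; case: ex_minnP => m _ min_m /eqP /min_m. Qed.

Lemma iter_par_root k : iter k par r = r.
Proof. by elim: k => //= k ->; rewrite par_root. Qed.

Lemma iter_par_ge_depth v k : (depth v <= k)%N -> iter k par v = r.
Proof. by move=> le_dk; rewrite -(subnK le_dk) iterD iter_depth iter_par_root. Qed.

Lemma depth_root : depth r = 0%N.
Proof. by apply/eqP; rewrite -leqn0; apply: depth_min. Qed.

Lemma depth_gt0 v : v != r -> (0 < depth v)%N.
Proof.
move=> vr; rewrite lt0n; apply: contra_neq vr => d0.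
by have := iter_depth v; rewrite d0.
Qed.

Lemma depth_par v : depth (par v) = (depth v).-1.
Proof.
have [->|vr] := eqVneq v r; first by rewrite par_root depth_root.
have d_gt0 := depth_gt0 vr.
apply/eqP; rewrite eqn_leq; apply/andP; split.
  by apply: depth_min; rewrite -iterSr prednK // iter_depth.
by rewrite -ltnS prednK //; apply: depth_min; rewrite iterSr iter_depth.
Qed.

Lemma depth_iter v k : depth (iter k par v) = (depth v - k)%N.
Proof. by elim: k => [|k IH]; rewrite ?subn0 // iterS depth_par IH subnS. Qed.

(* Pigeonhole: the iterates [iter i par v], [i <= depth v], have distinct depths. *)
Lemma depth_lt_card v : (depth v < #|V|)%N.
Proof.
pose f (i : 'I_(depth v).+1) := iter i par v.
suff /leq_card : injective f by rewrite card_ord.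
move=> i j /(congr1 depth); rewrite !depth_iter => eq_ij; apply/val_inj => /=.
by have := ltn_ord i; have := ltn_ord j; lia.
Qed.

Lemma ancP u v : reflect (exists k, iter k par v = u) (u \in anc v).
Proof.
rewrite /Defs.anc inE; apply: (iffP existsP) => [[k /eqP <-]|[k <-]]; first by exists k.
have [lt_k|ge_k] := ltnP k #|V|; first by exists (Ordinal lt_k).
exists (Ordinal (depth_lt_card v)) => /=; rewrite iter_depth iter_par_ge_depth //.
exact: leq_trans (ltnW (depth_lt_card v)) ge_k.
Qed.

Lemma anc_refl v : v \in anc v. Proof. by apply/ancP; exists 0%N. Qed.
Lemma par_in_anc v : par v \in anc v. Proof. by apply/ancP; exists 1%N. Qed.

Lemma anc_root : anc r = [set r].
Proof.
apply/setP => u; rewrite inE; apply/idP/eqP => [/ancP[k <-]|->]; last exact: anc_refl.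
exact: iter_par_root.
Qed.

Lemma anc_par v : anc v = v |: anc (par v).
Proof.
apply/setP => u; rewrite in_setU1.
apply/ancP/orP => [[[|k] <-]|[/eqP->|/ancP[k <-]]].
- by left.
- by right; apply/ancP; exists k; rewrite iterSr.
- by exists 0%N.
- by exists k.+1; rewrite iterSr.
Qed.

Lemma anc_trans u w v : u \in anc w -> w \in anc v -> u \in anc v.
Proof. by move=> /ancP[k <-] /ancP[j <-]; apply/ancP; exists (k + j)%N; rewrite iterD. Qed.

Lemma anc_depth_le u v : u \in anc v -> (depth u <= depth v)%N.
Proof. by move=> /ancP[k <-]; rewrite depth_iter leq_subr. Qed.

Lemma anc_iter_depth u v : u \in anc v -> u = iter (depth v - depth u) par v.
Proof.
move=> /ancP[k <-]; rewrite depth_iter.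
have [le_kd|lt_dk] := leqP k (depth v); first by rewrite subKn.
rewrite (iter_par_ge_depth (ltnW lt_dk)) (_ : depth v - k = 0)%N ?subn0 ?iter_depth //.
lia.
Qed.

Lemma childE c v : (c \in C v) = (c != r) && (par c == v).
Proof. by rewrite /children inE. Qed.

Lemma par_child c v : c \in C v -> par c = v.
Proof. by rewrite childE => /andP[_ /eqP]. Qed.

Lemma child_neq_root c v : c \in C v -> c != r.
Proof. by rewrite childE => /andP[]. Qed.

Lemma child_par c : c != r -> c \in C (par c).
Proof. by move=> cr; rewrite childE cr eqxx. Qed.

Lemma depth_child c v : c \in C v -> depth c = (depth v).+1.
Proof.
move=> cv; rewrite -(par_child cv) depth_par prednK //.
exact: depth_gt0 (child_neq_root cv).
Qed.

Definition subtree v := [set w | v \in anc w].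

Lemma subtreeE w v : (w \in subtree v) = (v \in anc w). Proof. by rewrite inE. Qed.
Lemma subtree_refl v : v \in subtree v. Proof. by rewrite subtreeE anc_refl. Qed.

Lemma subtree_root : subtree r = setT.
Proof.
by apply/setP => w; rewrite subtreeE in_setT; apply/ancP; exists (depth w); apply: iter_depth.
Qed.

Lemma subtree_child c v : c \in C v -> subtree c \subset subtree v.
Proof.
move=> cv; apply/subsetP => w; rewrite !subtreeE => /(anc_trans _); apply.
by rewrite -(par_child cv) par_in_anc.
Qed.

Lemma notin_subtree_child c v : c \in C v -> v \notin subtree c.
Proof.
by move=> cv; rewrite subtreeE; apply/negP => /anc_depth_le; rewrite (depth_child cv) ltnn.
Qed.

Lemma subtree_same_depth c1 c2 w :
  depth c1 = depth c2 -> w \in subtree c1 -> w \in subtree c2 -> c1 = c2.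
Proof. by move=> e; rewrite !subtreeE => /anc_iter_depth -> /anc_iter_depth ->; rewrite e. Qed.

Lemma subtree_children_disjoint c c' v : c \in C v -> c' \in C v -> c != c' ->
  [disjoint subtree c & subtree c'].
Proof.
move=> cv c'v; apply: contraNT => /pred0Pn[w /andP[wc wc']]; apply/eqP.
by apply: (subtree_same_depth _ wc wc'); rewrite (depth_child cv) (depth_child c'v).
Qed.

Lemma subtree_rec v : subtree v = v |: \bigcup_(c in C v) subtree c.
Proof.
apply/setP => w; rewrite in_setU1 subtreeE; apply/idP/orP; last first.
  case=> [/eqP->|/bigcupP[c cv]]; first exact: anc_refl.
  by move/(subsetP (subtree_child cv)); rewrite subtreeE.
move=> v_anc; have [->|wv] := eqVneq w v; [by left | right].
have lt_vw : (depth v < depth w)%N.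
  rewrite ltn_neqAle anc_depth_le // andbT; apply: contraNneq wv => e.
  by rewrite (anc_iter_depth v_anc) e subnn.
apply/bigcupP; exists (iter (depth w - depth v).-1 par w).
  rewrite childE -iterS prednK ?subn_gt0 // -(anc_iter_depth v_anc) eqxx andbT.
  apply/eqP => e; have := depth_iter w (depth w - depth v).-1.
  by rewrite e depth_root; lia.
by rewrite subtreeE; apply/ancP; eexists.
Qed.

Lemma big_subtree (M : nmodType) (f : V -> M) v :
  \sum_(w in subtree v) f w = f v + \sum_(c in C v) \sum_(w in subtree c) f w.
Proof.
rewrite subtree_rec big_setU1 /=; last first.
  by apply/bigcupP => -[c cv]; apply/negP; exact: notin_subtree_child.
congr (_ + _); rewrite (_ : \bigcup_(c in C v) _ =
  \bigcup_c (if c \in C v then subtree c else set0)); last by rewrite big_mkcond.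
rewrite partition_disjoint_bigcup => [|c c' neq_cc']; last first.
  case: ifP => cv; last by rewrite -setI_eq0 set0I.
  case: ifP => c'v; last by rewrite -setI_eq0 setI0.
  exact: subtree_children_disjoint cv c'v neq_cc'.
by rewrite [RHS]big_mkcond; apply: eq_bigr => c _; case: ifP; rewrite ?big_set0.
Qed.

Lemma actionE a : (a \in act) = (a \notin lvs) && (a \notin N).
Proof. by rewrite inE. Qed.

Lemma leafE v : (v \in lvs) = (C v == set0).
Proof. by rewrite inE. Qed.

Lemma leaf_children v : v \in lvs -> C v = set0.
Proof. by rewrite leafE => /eqP. Qed.

Lemma infoset_notin_actions v : v \in N -> v \notin act.
Proof. by move=> vN; rewrite actionE vN andbF. Qed.

Lemma leaf_notin_actions v : v \in lvs -> v \notin act.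
Proof. by move=> vl; rewrite actionE vl. Qed.

Lemma infoset_child_action v a : v \in N -> a \in C v -> a \in act.
Proof. by case: tree => _ _ _ inf _ /inf[_ /subsetP]; apply. Qed.

Lemma infoset_has_child v : v \in N -> exists a, a \in C v.
Proof.
case: tree => _ _ _ inf _ /inf[card_gt1 _]; apply/set0Pn.
by rewrite -card_gt0 (ltn_trans _ card_gt1).
Qed.

Lemma action_child a c : a \in act -> c \in C a -> (c \in N) || (c \in lvs).
Proof. by case: tree => _ _ _ _ act_ch /act_ch /subsetP sub /sub; rewrite in_setU. Qed.

Lemma action_neq_root a : a \in act -> a != r.
Proof. by apply: contraTneq => ->; rewrite infoset_notin_actions ?root_in_N. Qed.

Lemma par_notin_leaves c : c != r -> par c \notin lvs.
Proof. by move=> /child_par cp; rewrite leafE; apply/set0Pn; exists c. Qed.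

Lemma par_action a : a \in act -> par a \in N.
Proof.
move=> aA; have ar := action_neq_root aA.
have [paA|] := boolP (par a \in act); last by rewrite actionE par_notin_leaves //= negbK.
by have := action_child paA (child_par ar); move: aA; rewrite actionE => /andP[/negPf-> /negPf->].
Qed.

(** * The nodes reached by a strategy *)

Local Notation Vof := (Vof par r N).

Lemma closedbP (g : V -> option V) (X : {set V}) :
  r \in X -> (forall v w, v \in N -> v \in X -> g v = Some w -> w \in X) ->
  (forall a c, a \in act -> a \in X -> c \in C a -> c \in X) -> closedb par r N g X.
Proof.
move=> rX gX actX; rewrite /closedb rX /=; apply/andP; split;
  apply/forallP => v; apply/implyP => /setIP[vNA vX].
  by case e: (g v) => [w|] //; apply: gX e.
by apply/subsetP => c; apply: actX.
Qed.

Lemma Vof_min g (X : {set V}) : closedb par r N g X -> Vof g \subset X.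
Proof. by move=> cX; apply/subsetP => v; rewrite inE => /forallP/(_ X)/implyP; apply. Qed.

Lemma root_in_Vof g : r \in Vof g.
Proof. by rewrite inE; apply/forallP => X; apply/implyP => /and3P[]. Qed.

Lemma Vof_choice g v w : v \in N -> v \in Vof g -> g v = Some w -> w \in Vof g.
Proof.
move=> vN vV gv; rewrite inE; apply/forallP => X; apply/implyP => cX.
case/and3P: (cX) => _ /forallP/(_ v)/implyP + _; rewrite gv; apply.
by rewrite inE vN (subsetP (Vof_min cX)).
Qed.

Lemma Vof_action_child g a c : a \in act -> a \in Vof g -> c \in C a -> c \in Vof g.
Proof.
move=> aA aV ca; rewrite inE; apply/forallP => X; apply/implyP => cX.
case/and3P: (cX) => _ _ /forallP/(_ a)/implyP sub; apply: (subsetP (sub _)) ca.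
by rewrite inE aA (subsetP (Vof_min cX)).
Qed.

(** * Full strategies and their reductions *)

(* A function choosing a child at every node of [D] and equal to [r]
   elsewhere: the canonical representatives of the choices on [D]. *)
Local Notation strategies_on D := (pfamily r D C).
Local Notation full := (strategies_on N).
Local Notation Vs s := (Vof (fun u => Some (s u))).

Lemma strategies_onP (D : {set V}) (s : {ffun V -> V}) :
  reflect (forall w, if w \in D then is_true (s w \in C w) else s w = r)
          (s \in strategies_on D).
Proof.
apply: (iffP pfamilyP) => [[/subsetP supp sC] w|sD].
  by case: ifP => [/sC|wD] //; apply/eqP; apply: contraFT wD => /supp.
split=> [|w wD]; last by have := sD w; rewrite wD.
by apply/subsetP => w; rewrite inE; have := sD w; case: ifP => // _ ->; rewrite eqxx.
Qed.

Lemma full_strategy_child (s : {ffun V -> V}) v : s \in full -> v \in N -> s v \in C v.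
Proof. by move=> /pfamilyP[_]; apply. Qed.

Lemma Vof_par (s : {ffun V -> V}) w : s \in full -> w \in Vs s -> w != r ->
  par w \in Vs s /\ (par w \in N -> s (par w) = w).
Proof.
move=> sF wV wr.
pose Y := Vs s :&: [set w | (w == r) ||
  ((par w \in Vs s) && ((par w \in N) ==> (s (par w) == w)))].
suff /subsetP /(_ _ wV) /setIP[_] : Vs s \subset Y.
  by rewrite in_set (negPf wr) => /andP[pwV /implyP pwN]; split => // /pwN /eqP.
apply: Vof_min; apply: closedbP.
- by rewrite in_setI root_in_Vof in_set eqxx.
- move=> v x vN /setIP[vV _] [<-]; have svC := full_strategy_child sF vN.
  by rewrite in_setI (Vof_choice vN vV (erefl _)) in_set (par_child svC) vV vN eqxx orbT.
- move=> a c aA /setIP[aV _] ca.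
  rewrite in_setI (Vof_action_child aA aV ca) in_set (par_child ca) aV.
  by move: aA; rewrite actionE => /andP[_ /negPf->]; rewrite orbT.
Qed.

Lemma Vof_anc (s : {ffun V -> V}) w u : s \in full -> w \in Vs s -> u \in anc w -> u \in Vs s.
Proof.
move=> sF wV /ancP[k <-]; elim: k => // k IH; rewrite iterS.
have [->|ne] := eqVneq (iter k par w) r; first by rewrite par_root root_in_Vof.
exact: (Vof_par sF IH ne).1.
Qed.

Lemma subtree_off_choice (s : {ffun V -> V}) v c w : s \in full -> v \in N ->
  c \in C v -> c != s v -> w \in subtree c -> w \notin Vs s.
Proof.
move=> sF vN cv neq; rewrite subtreeE => cw; apply: contra_neqN neq => wV.
have [_] := Vof_par sF (Vof_anc sF wV cw) (child_neq_root cv).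
by rewrite (par_child cv) => /(_ vN) ->.
Qed.

Lemma Vof_eq_on (g g' : V -> option V) : {in N :&: Vof g, g =1 g'} -> Vof g' = Vof g.
Proof.
move=> gg'.
have sub : Vof g' \subset Vof g.
  apply: Vof_min; apply: closedbP; first exact: root_in_Vof.
  - by move=> v w vN vV g'v; apply: (Vof_choice vN vV); rewrite gg' // in_setI vN vV.
  - by move=> a c aA aV ca; apply: Vof_action_child ca.
apply/eqP; rewrite eqEsubset sub /=; apply: Vof_min; apply: closedbP.
- exact: root_in_Vof.
- move=> v w vN vV gv; apply: (Vof_choice vN vV).
  by rewrite -gg' // in_setI vN (subsetP sub _ vV).
- by move=> a c aA aV ca; apply: Vof_action_child ca.
Qed.

Lemma reduce_Some (s : {ffun V -> V}) v : v \in N -> v \in Vs s ->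
  reduce par r N s v = Some (s v).
Proof. by move=> vN vV; rewrite ffunE in_setI vN vV. Qed.

Lemma Vof_reduce (s : {ffun V -> V}) : Vof (reduce par r N s) = Vs s.
Proof. by apply: Vof_eq_on => v /setIP[vN vV]; rewrite reduce_Some. Qed.

Lemma reduce_eqP (s s' : {ffun V -> V}) :
  reduce par r N s = reduce par r N s' <->
  (forall v, v \in N -> v \in Vs s -> s v = s' v).
Proof.
split=> [e v vN vV|eq_ss'].
  have vV' : v \in Vs s' by rewrite -Vof_reduce -e Vof_reduce.
  by have := reduce_Some vN vV; rewrite e reduce_Some // => -[].
have eqV : Vs s' = Vs s by apply: Vof_eq_on => v /setIP[vN vV] /=; rewrite eq_ss'.
apply/ffunP => v; rewrite !ffunE eqV !in_setI.
by have [vN|] //= := boolP (v \in N); case: ifP => // vV; rewrite eq_ss'.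
Qed.

Lemma reduced_strategiesE : reduced_strategies par r N = reduce par r N @: full.
Proof.
apply/setP => rho; apply/imsetP/imsetP => -[s sS ->]; last first.
  by exists s => //; rewrite inE; apply/forallP => w; apply/implyP; exact: full_strategy_child.
exists [ffun v => if v \in N then s v else r].
  apply/strategies_onP => w; rewrite ffunE; case: ifP => wN; rewrite wN //.
  by move: sS; rewrite inE => /forallP/(_ w); rewrite wN.
by apply/reduce_eqP => v vN _; rewrite ffunE vN.
Qed.

(** * Expectation under the product distribution of the choices *)

Definition merge (A : {set V}) (s1 s2 : {ffun V -> V}) : {ffun V -> V} :=
  [ffun w => if w \in A then s1 w else s2 w].

Lemma sum_strategies_on_split (M : nmodType) (D A : {set V}) (F : {ffun V -> V} -> M) :
  \sum_(s in strategies_on D) F s =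
  \sum_(s1 in strategies_on (D :&: A)) \sum_(s2 in strategies_on (D :\: A))
     F (merge A s1 s2).
Proof.
rewrite pair_big_dep /=.
pose split_on (s : {ffun V -> V}) := ([ffun w => if w \in A then s w else r],
                                      [ffun w => if w \in A then r else s w]).
rewrite (reindex_onto (fun p => merge A p.1 p.2) split_on) => [|s _]; last first.
  by apply/ffunP => w; rewrite !ffunE; case: (w \in A).
apply: eq_bigl => -[s1 s2] /=.
apply/andP/andP => [[/strategies_onP sD /eqP[e1 e2]]|[/strategies_onP s1D /strategies_onP s2D]].
  have s1A w : w \notin A -> s1 w = r by move=> wA; rewrite -e1 ffunE (negPf wA).
  have s2A w : w \in A -> s2 w = r by move=> wA; rewrite -e2 ffunE wA.
  split; apply/strategies_onP => w; have := sD w; rewrite !ffunE !inE.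
    by case: (boolP (w \in A)) => wA; rewrite ?andbT ?andbF //= ?s1A //; case: ifP.
  by case: (boolP (w \in A)) => wA; rewrite ?andbT ?andbF //= ?s2A //; case: ifP.
split.
  apply/strategies_onP => w; rewrite ffunE; have := s1D w; have := s2D w.
  by rewrite !inE; case: (w \in A); case: (w \in D).
apply/eqP; congr pair; apply/ffunP => w; rewrite !ffunE; case: (boolP (w \in A)) => wA //.
  by have := s1D w; rewrite in_setI (negPf wA) andbF => ->.
by have := s2D w; rewrite in_setD wA => ->.
Qed.

Section Expectation.
Variables (R : comRingType) (pi : V -> R).

Definition expect (D : {set V}) (F : {ffun V -> V} -> R) : R :=
  \sum_(s in strategies_on D) (\prod_(w in D) pi (s w)) * F s.

Definition depends_on (A : {set V}) (F : {ffun V -> V} -> R) :=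
  forall s s' : {ffun V -> V}, {in A, forall w, s w = s' w} -> F s = F s'.

Lemma sum_prod_strategies_on (D : {set V}) (Q : V -> {set V}) :
  {in D, forall w, Q w \subset C w} ->
  \sum_(s in strategies_on D | [forall w in D, s w \in Q w]) \prod_(w in D) pi (s w) =
  \prod_(w in D) \sum_(a in Q w) pi a.
Proof.
move=> QC; rewrite (big_distr_big_dep r); apply: eq_bigl => s /=.
apply/andP/pfamilyP => [[/pfamilyP[supp _] /forallP sQ]|[supp sQ]].
  by split=> // w wD; have := sQ w; rewrite wD.
split; last by apply/forallP => w; apply/implyP; apply: sQ.
by apply/pfamilyP; split=> // w wD; apply: (subsetP (QC _ wD)); apply: sQ.
Qed.

Hypothesis pi_sum1 : {in N, forall v, \sum_(a in C v) pi a = 1}.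

Lemma expect1 (D : {set V}) : D \subset N -> expect D (fun=> 1) = 1.
Proof.
move=> DN; rewrite /expect; under eq_bigr do rewrite mulr1.
rewrite -(eq_bigl _ _ (fun s => andbT (s \in strategies_on D))).
rewrite (eq_bigl (fun s => (s \in strategies_on D) && [forall w in D, s w \in C w])).
  by rewrite sum_prod_strategies_on // big1 // => w /(subsetP DN) /pi_sum1.
move=> s; case: (boolP (s \in _)) => //= /pfamilyP[_ sC].
by apply/esym/forallP => w; apply/implyP => /sC.
Qed.

Lemma expect_split (D A : {set V}) (g h : {ffun V -> V} -> R) :
  depends_on A g -> depends_on (~: A) h ->
  expect D (fun s => g s * h s) = expect (D :&: A) g * expect (D :\: A) h.
Proof.
move=> g_A h_A; rewrite /expect (sum_strategies_on_split D A) big_distrlr /=.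
apply: eq_bigr => s1 _; apply: eq_bigr => s2 _.
rewrite (g_A _ s1) => [|w wA]; last by rewrite ffunE wA.
rewrite (h_A _ s2) => [|w]; last by rewrite inE ffunE => /negPf->.
have prodI : \prod_(w in D | w \in A) pi (merge A s1 s2 w) = \prod_(w in D :&: A) pi (s1 w).
  rewrite big_mkcond [RHS]big_mkcond; apply: eq_bigr => w _.
  by rewrite in_setI ffunE; case: (w \in A); rewrite ?andbT ?andbF.
have prodD : \prod_(w in D | w \notin A) pi (merge A s1 s2 w) = \prod_(w in D :\: A) pi (s2 w).
  rewrite big_mkcond [RHS]big_mkcond; apply: eq_bigr => w _.
  by rewrite in_setD ffunE; case: (w \in A); rewrite ?andbT ?andbF.
rewrite (bigID (mem A)) /= prodI prodD.
by rewrite mulrACA.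
Qed.

Lemma expectM (A : {set V}) (g h : {ffun V -> V} -> R) :
  depends_on A g -> depends_on (~: A) h ->
  expect N (fun s => g s * h s) = expect N g * expect N h.
Proof.
move=> g_A h_A; rewrite (expect_split _ g_A h_A); symmetry.
have const_dep B : depends_on B (fun=> 1) by [].
congr (_ * _).
  rewrite -[RHS]mulr1 -(expect1 (subsetDl N A)) -expect_split //.
  by apply: eq_bigr => s _; rewrite mulr1.
rewrite -[RHS]mul1r -(expect1 (subsetIl N A)) -expect_split //.
by apply: eq_bigr => s _; rewrite mul1r.
Qed.

Lemma eq_expect (F G : {ffun V -> V} -> R) :
  {in full, F =1 G} -> expect N F = expect N G.
Proof. by move=> FG; apply: eq_bigr => s sF; rewrite FG. Qed.

Lemma expectD (F G : {ffun V -> V} -> R) :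
  expect N (fun s => F s + G s) = expect N F + expect N G.
Proof. by rewrite /expect -big_split /=; apply: eq_bigr => s _; rewrite mulrDr. Qed.

Lemma expectZ c (F : {ffun V -> V} -> R) :
  expect N (fun s => c * F s) = c * expect N F.
Proof. by rewrite /expect big_distrr /=; apply: eq_bigr => s _; rewrite mulrCA. Qed.

Lemma expect_cst c : expect N (fun=> c) = c.
Proof.
rewrite (@eq_expect _ (fun s => c * 1)) => [|s _]; last by rewrite mulr1.
by rewrite expectZ expect1 ?mulr1.
Qed.

Lemma expect_choice v b : v \in N -> b \in C v -> expect N (fun s => (s v == b)%:R) = pi b.
Proof.
move=> vN bv; rewrite /expect.
under eq_bigr do rewrite mulr_natr mulrb.
rewrite -big_mkcondr /=.
pose Q w := if w == v then [set b] else C w.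
rewrite (eq_bigl (fun s => (s \in strategies_on N) && [forall w in N, s w \in Q w])).
  rewrite sum_prod_strategies_on => [|w _]; last first.
    by rewrite /Q; case: eqP => [->|]; rewrite ?sub1set.
  rewrite (bigD1 v) //= [X in _ * X]big1 => [|w /andP[wN /negPf wv]]; last first.
    by rewrite /Q wv pi_sum1.
  by rewrite /Q eqxx big_set1 mulr1.
move=> s; case: (boolP (s \in _)) => //= /pfamilyP[_ sC].
apply/eqP/forallP => [svb w|]; last by move/(_ v); rewrite vN /Q eqxx inE => /eqP.
by apply/implyP => wN; rewrite /Q; case: eqP => [->|_]; [rewrite inE svb | exact: sC].
Qed.

Lemma expect_choiceM v b (F : {ffun V -> V} -> R) : v \in N -> b \in C v ->
  depends_on (~: [set v]) F -> expect N (fun s => (s v == b)%:R * F s) = pi b * expect N F.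
Proof.
move=> vN bv F_v; rewrite (expectM (A := [set v])) ?expect_choice // => s s' ss'.
by rewrite ss' ?set11.
Qed.

Lemma expect_prod (S : V -> {set V}) (l : seq V) (g : V -> {ffun V -> V} -> R) :
  uniq l -> {in l, forall u, depends_on (S u) (g u)} ->
  {in l &, forall u u', u != u' -> [disjoint S u & S u']} ->
  expect N (fun s => \prod_(u <- l) g u s) = \prod_(u <- l) expect N (g u).
Proof.
elim: l => [_ _ _|u l IH /= /andP[ul l_uniq] g_S S_disj].
  by rewrite big_nil -[RHS](expect_cst 1); apply: eq_expect => s _; rewrite big_nil.
rewrite big_cons -IH //; last 2 first.
- by move=> u' u'l; apply: g_S; rewrite inE u'l orbT.
- by move=> u1 u2 u1l u2l; apply: S_disj; rewrite inE (u1l, u2l) orbT.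
rewrite -(expectM (A := S u)); first by apply: eq_expect => s _; rewrite big_cons.
  by apply: g_S; exact: mem_head.
move=> s s' ss'; apply: eq_big_seq => u' u'l.
have neq : u != u' by apply: contraNneq ul => ->.
apply: g_S; first by rewrite inE u'l orbT.
move=> w wS'; apply: ss'; rewrite inE; apply: contraTN wS' => wS.
by rewrite (disjointFr (S_disj _ _ (mem_head _ _) _ neq) wS) // inE u'l orbT.
Qed.

End Expectation.

(** * Factorisation of the exponential weight *)

Section SubtreeWeight.
Variables (R : realType) (st : {ffun V -> V}) (theta : V -> R).
Hypothesis st_full : st \in full.
Hypothesis theta_off : {in ~: Vs st, theta =1 fun=> 0}.

(* The factor of [expR (- \sum_(a in A(s)) theta a)] contributed by the
   subtree of [v]: only the part of [s] agreeing with [st] matters. *)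
Fixpoint subtree_weight (k : nat) (v : V) (s : {ffun V -> V}) : R :=
  match k with
  | 0 => 1
  | k'.+1 => if s v == st v then
               expR (- theta (st v)) * \prod_(u in C (st v) :&: N) subtree_weight k' u s
             else 1
  end.

Lemma subtree_weight_depends k v : v \in N -> depends_on (subtree v) (subtree_weight k v).
Proof.
elim: k v => [//|k IH] v vN s s' ss' /=.
rewrite ss' ?subtree_refl //; case: ifP => // _; congr (_ * _).
apply: eq_bigr => u /setIP[uC uN]; apply: IH => // w wu; apply: ss'.
have sub := subtree_child (full_strategy_child st_full vN).
exact: subsetP sub _ (subsetP (subtree_child uC) _ wu).
Qed.

Lemma expR_subtree_sum k v (s : {ffun V -> V}) : s \in full -> v \in N ->
  v \in Vs s -> v \in Vs st -> (#|V| <= k + depth v)%N ->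
  expR (- \sum_(w in subtree v | w \in act :&: Vs s) theta w) = subtree_weight k v s.
Proof.
move=> sF; elim: k v => [|k IH] v vN vVs vVst fuel.
  by move: fuel; rewrite add0n leqNgt depth_lt_card.
rewrite big_mkcondr big_subtree in_setI (negPf (infoset_notin_actions vN)) add0r.
rewrite (bigD1 (s v)) ?full_strategy_child //= [X in _ + X]big1 ?addr0; last first.
  move=> c /andP[cv c_sv]; apply: big1 => w wc.
  by rewrite in_setI (negPf (subtree_off_choice sF vN cv c_sv wc)) andbF.
case: eqP => [sv_st|/eqP sv_st]; last first.
  rewrite big1 ?oppr0 ?expR0 // => w wsv; case: ifP => // _; apply: theta_off.
  by rewrite inE (subtree_off_choice st_full vN _ sv_st wsv) ?full_strategy_child.
have bA : st v \in act by rewrite -sv_st (infoset_child_action vN) ?full_strategy_child.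
have bVs : st v \in Vs s by rewrite -sv_st (Vof_choice vN vVs (erefl _)).
have bVst : st v \in Vs st by apply: Vof_choice vN vVst (erefl _).
rewrite sv_st big_subtree in_setI bA bVs (bigID (mem N)) /=.
rewrite [X in _ + (_ + X)]big1 ?addr0 => [|u /andP[ub uN]]; last first.
  have ul : u \in lvs by have := action_child bA ub; rewrite (negPf uN).
  by rewrite big_subtree leaf_children // big_set0 addr0 in_setI (negPf (leaf_notin_actions ul)).
rewrite opprD expRD -sumrN expR_sum; congr (_ * _).
rewrite (eq_bigl (mem (C (st v) :&: N))) => [|u]; last by rewrite !inE.
apply: eq_bigr => u /setIP[ub uN]; rewrite -big_mkcondr IH //.
- exact: Vof_action_child bA bVs ub.
- exact: Vof_action_child bA bVst ub.
- by move: fuel; rewrite (depth_child ub) (depth_child (full_strategy_child st_full vN)); lia.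
Qed.

End SubtreeWeight.

Lemma qpol_root (R : realType) (pi : V -> R) : qpol par r N pi r = 1.
Proof.
rewrite /qpol anc_root big1 // => w /setIP[/set1P -> rA].
by move: (action_neq_root rA); rewrite eqxx.
Qed.

Lemma qpol_child (R : realType) (pi : V -> R) c v : c \in C v ->
  qpol par r N pi c = (if c \in act then pi c else 1) * qpol par r N pi v.
Proof.
move=> cv; rewrite /qpol anc_par (par_child cv) setIUl.
have c_anc : c \notin anc v by rewrite -subtreeE notin_subtree_child.
case: ifP => cA.
  by rewrite (setIidPl _) ?sub1set ?cA // big_setU1 //= in_setI negb_and c_anc.
rewrite mul1r (_ : [set c] :&: act = set0) ?set0U //.
by apply/setP => w; rewrite in_setI in_set1 in_set0; case: eqP => // ->; rewrite cA.
Qed.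

Section ExpectSubtreeWeight.
Variables (R : realType) (pi : V -> R) (st : {ffun V -> V}).
Variables (theta d : V -> R) (eta gamma : R).
Hypothesis st_full : st \in full.
Hypothesis pi_sum1 : {in N, forall v, \sum_(a in C v) pi a = 1}.
Hypothesis theta_def :
  {in Vs st, forall a, theta a = eta * d a / (gamma * beta par r N R a + qpol par r N pi a)}.

(* [qpol pi v] is the argument [x] of the call [Update(v, x)]. *)
Lemma expect_subtree_weight k v : v \in N -> v \in Vs st ->
  expect pi N (subtree_weight st theta k v) =
  psiF par r N pi (reduce par r N st) d eta gamma k v (qpol par r N pi v).
Proof.
elim: k v => [|k IH] v vN vV; first exact: expect_cst.
set b := st v; have bv : b \in C v := full_strategy_child st_full vN.
have bA : b \in act := infoset_child_action vN bv.
have bV : b \in Vs st := Vof_choice vN vV (erefl _).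
have q_b : qpol par r N pi b = pi b * qpol par r N pi v by rewrite (qpol_child _ bv) bA.
have weightE s : subtree_weight st theta k.+1 v s = 1 + (s v == b)%:R *
    (expR (- theta b) * \prod_(u <- enum (C b :&: N)) subtree_weight st theta k u s - 1).
  by rewrite /= big_enum /=; case: eqP; rewrite ?mul1r ?mul0r ?addr0 // addrC subrK.
rewrite (eq_expect _ (in1W weightE)) expectD expect_cst // expect_choiceM //; last first.
  move=> s s' ss'; congr (_ * _ - _); apply: eq_big_seq => u; rewrite mem_enum.
  move=> /setIP[ub uN]; apply: subtree_weight_depends => // w wu; apply: ss'.
  rewrite !inE; apply: contraTneq wu => ->.
  by apply: contraNN (notin_subtree_child bv); apply: (subsetP (subtree_child ub)).
rewrite expectD expectZ expect_cst // (expect_prod _ (S := subtree)) //; first last.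
- move=> u u'; rewrite !mem_enum => /setIP[ub _] /setIP[u'b _].
  exact: subtree_children_disjoint ub u'b.
- by move=> u; rewrite mem_enum => /setIP[_ uN]; apply: subtree_weight_depends.
- exact: enum_uniq.
rewrite big_enum /=.
rewrite (eq_bigr (fun u => psiF par r N pi (reduce par r N st) d eta gamma k u
                                (pi b * qpol par r N pi v))); last first.
  move=> u /setIP[ub uN]; rewrite IH ?(Vof_action_child bA bV ub) //.
  by rewrite (qpol_child _ ub) (negPf (infoset_notin_actions uN)) mul1r -q_b.
by rewrite /bch (reduce_Some vN vV) -/b theta_def // q_b mulNr; ring.
Qed.

End ExpectSubtreeWeight.

Lemma actions_of_full (s : {ffun V -> V}) : s \in full ->
  act :&: Vs s = [set s v | v in N :&: Vs s].
Proof.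
move=> sF; apply/setP => a; apply/setIP/imsetP => [[aA aV]|[v /setIP[vN vV] ->]].
  have [paV /(_ (par_action aA)) spa] := Vof_par sF aV (action_neq_root aA).
  by exists (par a); rewrite ?in_setI ?par_action ?spa.
by rewrite (infoset_child_action vN (full_strategy_child sF vN)) (Vof_choice vN vV).
Qed.

Section ReducedStrategies.
Variables (R : comRingType) (pi : V -> R).
Hypothesis pi_sum1 : {in N, forall v, \sum_(a in C v) pi a = 1}.

(* Summing out the choices off [V(s0)] leaves the probability that the
   sampled reduced strategy is [reduce s0]. *)
Lemma prob_reduce (s0 : {ffun V -> V}) : s0 \in full ->
  \sum_(s in full | reduce par r N s == reduce par r N s0) \prod_(w in N) pi (s w) =
  \prod_(a in act :&: Vs s0) pi a.
Proof.
move=> s0F; pose Q w := if w \in Vs s0 then [set s0 w] else C w.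
rewrite (eq_bigl (fun s => (s \in full) && [forall w in N, s w \in Q w])) => [|s].
  rewrite sum_prod_strategies_on => [|w wN]; last first.
    by rewrite /Q; case: ifP; rewrite ?sub1set ?full_strategy_child.
  rewrite (eq_bigr (fun w => if w \in Vs s0 then pi (s0 w) else 1)) => [|w wN]; last first.
    by rewrite /Q; case: ifP; rewrite ?big_set1 ?pi_sum1.
  rewrite -big_mkcondr (actions_of_full s0F) big_imset => [|v v' /setIP[vN _] /setIP[v'N _]].
    by apply: eq_bigl => w; rewrite in_setI.
  have [sv sv'] := (full_strategy_child s0F vN, full_strategy_child s0F v'N).
  by move=> e; rewrite -(par_child sv) e (par_child sv').
case: (boolP (s \in full)) => //= sF; apply/eqP/forallP => [/esym/reduce_eqP e w|sQ].
  apply/implyP => wN; rewrite /Q; case: ifP => wV; last exact: full_strategy_child.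
  by rewrite in_set1 e.
apply/esym/reduce_eqP => v vN vV.
by have := sQ v; rewrite vN /Q vV in_set1 => /eqP.
Qed.

Lemma sum_reduced_strategies (F : {ffun V -> option V} -> R) :
  \sum_(rho in reduced_strategies par r N) (\prod_(a in Aof par r N rho) pi a) * F rho =
  expect pi N (fun s => F (reduce par r N s)).
Proof.
rewrite /expect (partition_big_imset (reduce par r N)) -reduced_strategiesE /=.
apply: eq_bigr => rho; rewrite reduced_strategiesE => /imsetP[s0 s0F ->].
rewrite (eq_bigr (fun s : {ffun V -> V} => (\prod_(w in N) pi (s w)) * F (reduce par r N s0)))
  => [|s].
  by rewrite -big_distrl prob_reduce // /Aof Vof_reduce.
by case/andP => _ /eqP->.
Qed.

End ReducedStrategies.

(** * Policies *)

Lemma nF_stable k k' v : (#|V| - depth v <= k)%N -> (#|V| - depth v <= k')%N ->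
  nF par r N k v = nF par r N k' v.
Proof.
have := depth_lt_card v; elim: k k' v => [|k IH] [|k'] v lt_dV fuel fuel' //=; try lia.
case: ifP => _; apply: eq_bigr => u.
  by case/setIP => uv _; apply: IH; rewrite ?depth_lt_card // (depth_child uv); lia.
by move=> uv; apply: IH; rewrite ?depth_lt_card // (depth_child uv); lia.
Qed.

Lemma nF_gt0 k v : (v \in N) || (v \in act) -> (#|V| - depth v <= k)%N ->
  (0 < nF par r N k v)%N.
Proof.
have := depth_lt_card v; elim: k v => [|k IH] v lt_dV vNA fuel /=; first lia.
case: ifP => vA.
  apply: prodn_cond_gt0 => u /setIP[uv uN].
  by apply: IH; rewrite ?uN ?depth_lt_card // (depth_child uv); lia.
have vN : v \in N by rewrite vA orbF in vNA.
have [a av] := infoset_has_child vN.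
rewrite (bigD1 a) //= ltn_addr // IH ?(infoset_child_action vN av) ?orbT ?depth_lt_card //.
by rewrite (depth_child av); lia.
Qed.

Lemma nfun_infoset v : v \in N -> nfun par r N v = (\sum_(a in C v) nfun par r N a)%N.
Proof.
move=> vN; rewrite /nfun; have := depth_lt_card v; case def_n: #|V| => [|n] // lt_dV.
rewrite [LHS]/= (negPf (infoset_notin_actions vN)); apply: eq_bigr => a av.
by apply: nF_stable; rewrite (depth_child av); lia.
Qed.

Section Policies.
Variable R : realType.

Definition is_policy (pi : V -> R) :=
  {in act, forall a, 0 <= pi a} /\ {in N, forall v, \sum_(a in C v) pi a = 1}.

Lemma policy_in01 pi v a : is_policy pi -> v \in N -> a \in C v -> 0 <= pi a <= 1.
Proof.
move=> [pi_ge0 pi_sum1] vN av; rewrite pi_ge0 ?(infoset_child_action vN) //=.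
rewrite -(pi_sum1 _ vN) (bigD1 a) //= lerDl sumr_ge0 // => b /andP[bv _].
exact/pi_ge0/(infoset_child_action vN bv).
Qed.

Lemma pi1_is_policy : is_policy (pi1 par r N R).
Proof.
split=> [a _|v vN]; first by rewrite divr_ge0 ?ler0n.
rewrite (eq_bigr (fun a => (nfun par r N a)%:R / (nfun par r N v)%:R)) => [|a av]; last first.
  by rewrite /pi1 (par_child av).
rewrite -mulr_suml -natr_sum -nfun_infoset // mulfV // pnatr_eq0 -lt0n.
by apply: nF_gt0; rewrite ?vN //; lia.
Qed.

Variables (pi : V -> R) (st : {ffun V -> V}) (d : V -> R) (eta gamma : R).
Hypotheses (pi_policy : is_policy pi) (st_full : st \in full).
Local Notation sigma := (reduce par r N st).

Lemma bch_reduce v : v \in N -> v \in Vs st -> bch sigma v = st v.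
Proof. by move=> vN vV; rewrite /bch (reduce_Some vN vV). Qed.

Lemma psiF_gt0 k v x : v \in N -> v \in Vs st -> 0 < psiF par r N pi sigma d eta gamma k v x.
Proof.
elim: k v x => [//|k IH] v x vN vV /=; rewrite bch_reduce //.
have sv := full_strategy_child st_full vN.
rewrite update_denom_gt0 ?(policy_in01 pi_policy vN sv) // mulr_gt0 ?expR_gt0 //.
apply: prodr_gt0 => u /setIP[usv uN]; apply: IH => //.
exact: Vof_action_child (infoset_child_action vN sv) (Vof_choice vN vV _) usv.
Qed.

Lemma omega_gt0 v x : v \in N -> v \in Vs st -> 0 < omega par r N pi sigma d eta gamma v x.
Proof.
move=> vN vV; rewrite /omega bch_reduce // mulr_gt0 ?expR_gt0 //.
have sv := full_strategy_child st_full vN.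
apply: prodr_gt0 => u /setIP[usv uN]; apply: psiF_gt0 => //.
exact: Vof_action_child (infoset_child_action vN sv) (Vof_choice vN vV _) usv.
Qed.

Lemma newpi_is_policy : is_policy (newpi par r N pi sigma d eta gamma).
Proof.
have [pi_ge0 pi_sum1] := pi_policy.
split=> [a aA|v vN].
  rewrite /newpi aA /Nof Vof_reduce /=; case: ifP => [/setIP[paN paV]|_]; last exact: pi_ge0.
  set w := omega _ _ _ _ _ _ _ _ _ _; have w_gt0 : 0 < w by apply: omega_gt0.
  have sv := full_strategy_child st_full paN.
  have den_gt0 := update_denom_gt0 (policy_in01 pi_policy paN sv) w_gt0.
  rewrite bch_reduce // divr_ge0 ?(ltW den_gt0) //.
  case: ifP => _; last exact: pi_ge0.
  by rewrite mulr_ge0 ?(ltW w_gt0) ?pi_ge0.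
have [vV|vV] := boolP (v \in Vs st); last first.
  rewrite -(pi_sum1 _ vN); apply: eq_bigr => a av.
  by rewrite /newpi (par_child av) /Nof Vof_reduce in_setI (negPf vV) !andbF.
pose w := omega par r N pi sigma d eta gamma v (xcall par r pi v).
have w_gt0 : 0 < w by apply: omega_gt0.
have sv := full_strategy_child st_full vN.
rewrite (eq_bigr (fun a => (if a == st v then w * pi a else pi a) / (1 - (1 - w) * pi (st v))))
  => [|a av]; last first.
  rewrite /newpi (par_child av) /Nof Vof_reduce in_setI vN vV (infoset_child_action vN av).
  by rewrite bch_reduce.
rewrite -mulr_suml (bigD1 (st v)) //= eqxx (eq_bigr pi) => [|a /andP[_ /negPf->]] //.
have -> : \sum_(a in C v | a != st v) pi a = 1 - pi (st v).
  by rewrite -(pi_sum1 _ vN) [in RHS](bigD1 (st v)) //=; ring.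
rewrite (_ : w * pi (st v) + (1 - pi (st v)) = 1 - (1 - w) * pi (st v)); last by ring.
by rewrite mulfV // gt_eqF // update_denom_gt0 ?(policy_in01 pi_policy vN sv).
Qed.

End Policies.

Lemma polF_is_policy (R : realType) lam T eps mu sig phi k :
  (forall s, (1 <= s <= T)%N -> sig s \in reduced_strategies par r N) -> (k <= T)%N ->
  is_policy (polF par r N (R := R) lam T eps mu sig phi k).
Proof.
move=> sig_red; elim: k => [_|k IH lt_kT] /=; first exact: pi1_is_policy.
have /imsetP[s sF ->] : sig k.+1 \in reduce par r N @: full.
  by rewrite -reduced_strategiesE sig_red.
by apply: newpi_is_policy => //; apply: IH; apply: ltnW.
Qed.

End GameTree.

Theorem mainTheorem10 (V : finType) (par : V -> V) (r : V) (N : {set V})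
  (R : realType) (lam : V -> R) (T : nat) (eps : R)
  (mu : nat -> {ffun V -> V}) (sig : nat -> {ffun V -> option V})
  (phi : nat -> V -> R) (t : nat) :
  is_game_tree par r N ->
  (forall u, u \in leaves par r -> 0 <= lam u <= 1) ->
  0 < eps < 1 ->
  (forall s a, a \in actions par r N -> mu s a \in children par r a) ->
  (forall s, (1 <= s <= T)%N -> sig s \in reduced_strategies par r N) ->
  (1 <= t <= T)%N ->
  psi_root par r N lam T eps mu sig phi t =
  \sum_(s in reduced_strategies par r N)
     (\prod_(a in Aof par r N s) pi_t par r N lam T eps mu sig phi t a)
     * expR (- \sum_(a in Aof par r N s) theta par r N lam T eps mu sig phi t a).
Proof.
move=> tree _ _ _ sig_red /andP[t_ge1 t_leT].
set pi := pi_t par r N lam T eps mu sig phi t.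
set th := theta par r N lam T eps mu sig phi t.
have [_ pi_sum1] : is_policy par r N pi.
  by rewrite /pi /pi_t; apply: polF_is_policy => //; apply: leq_trans (leq_pred t) t_leT.
have /imsetP[st st_full sig_t] : sig t \in reduce par r N @: pfamily r N (children par r).
  by rewrite -reduced_strategiesE ?sig_red ?t_ge1.
have th_off : {in ~: Vof par r N (fun u => Some (st u)), th =1 fun=> 0}.
  by move=> a; rewrite inE /th /theta sig_t Vof_reduce => /negPf->.
rewrite (sum_reduced_strategies tree pi_sum1
  (fun rho => expR (- \sum_(a in Aof par r N rho) th a))).
rewrite /psi_root -/pi sig_t -(qpol_root tree pi).
rewrite -(expect_subtree_weight tree (theta := th)) ?(root_in_N tree) ?root_in_Vof //; last first.
  by move=> a aV; rewrite /th /theta sig_t Vof_reduce aV.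
apply: eq_expect => s sF; rewrite /Aof Vof_reduce.
rewrite -(expR_subtree_sum (tree := tree) st_full th_off sF) ?(root_in_N tree) ?root_in_Vof //;
  last by lia.
rewrite (subtree_root tree); congr (expR (- _)).
by apply: eq_bigl => w; rewrite in_setT.
Qed.
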